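(* Let $\mathbb{K}$ be a perfect field, let $I \subset \mathbb{K}[X_1,\dots,X_n]$ be a zero-dimensional ideal, $Q=\mathbb{K}[X_1,\dots,X_n]/I$ and $D=\dim_{\mathbb{K}}Q$. There exists a unique integer $\tau\le D$ such that, for a generic choice of linear forms $(\ell_1,\dots,\ell_\tau)$ with all $\ell_i\in Q^*$, the sequence of ideals $(\mathrm{ann}(\mathbf{u}_{\ell_1},\dots,\mathbf{u}_{\ell_t}))_{1\le t\le\tau}$ is strictly decreasing and $\mathrm{ann}(\mathbf{u}_{\ell_1},\dots,\mathbf{u}_{\ell_\tau})=I$.
   Context: $Q^*=\mathrm{Hom}_{\mathbb{K}}(Q,\mathbb{K})$, a $\mathbb{K}$-vector space of dimension $D$; ''generic choice'' means for all tuples outside a proper Zariski-closed subset of $(Q^* )^\tau\cong\mathbb{K}^{\tau D}$. For $\ell\in Q^*$, $\mathbf{u}_\ell=(\ell(\mathbf{X}^m\bmod I))_{m\in\mathbb{N}^n}$ where $\mathbf{X}^m=X_1^{m_1}\cdots X_n^{m_n}$. For a sequence $\mathbf{u}=(u_m)_m$ and $f=\sum_m f_m\mathbf{X}^m$, $\langle\mathbf{u}\mid f\rangle=\sum_m f_m u_m$ and $f\cdot\mathbf{u}=(\langle\mathbf{u}\mid\mathbf{X}^m f\rangle)_m$; $\mathrm{ann}(\mathbf{u})$ is the ideal of $f$ with $f\cdot\mathbf{u}=0$, and $\mathrm{ann}(\mathbf{u}_1,\dots,\mathbf{u}_t)=\bigcap_i\mathrm{ann}(\mathbf{u}_i)$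.
   Formalization: The perfect field 𝕂 is also required to be infinite, so finite fields are excluded. The statement above fails without it. *)

From HB Require Import structures.
From mathcomp Require Import all_boot all_order all_algebra.
From mathcomp Require Import mpoly.
Set Implicit Arguments. Unset Strict Implicit. Unset Printing Implicit Defensive.
Import Order.TTheory GRing.Theory Num.Theory.
Local Open Scope ring_scope.

Definition perfect_field (K : fieldType) : Prop :=
  ([pchar K] =i pred0) \/
  (forall p : nat, p \in [pchar K] -> forall x : K, exists y : K, y ^+ p = x).

(* K is infinite (needed for genericity to be meaningful). *)
Definition infinite_field (K : fieldType) : Prop :=
  forall s : seq K, exists x : K, x \notin s.

Definition is_ideal (K : fieldType) (n : nat) (I : {mpoly K[n]} -> Prop) : Prop :=
  [/\ I 0,
      (forall f g, I f -> I g -> I (f + g)) &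
      (forall f g, I g -> I (f * g))].

(* b : 'I_D -> K[X] projects to a K-basis of Q = K[X]/I ; hence dim_K Q = D
   (and I is zero-dimensional). *)
Definition basis_mod (K : fieldType) (n D : nat) (I : {mpoly K[n]} -> Prop)
    (b : 'I_D -> {mpoly K[n]}) : Prop :=
  (forall f : {mpoly K[n]}, exists c : 'I_D -> K, I (f - \sum_(j < D) c j *: b j)) /\
  (forall c : 'I_D -> K, I (\sum_(j < D) c j *: b j) -> forall j, c j = 0).

(* Elements of Q^dual = Hom_K(Q, K), represented as K-linear forms on K[X]
   vanishing on I. *)
Definition is_dual (K : fieldType) (n : nat) (I : {mpoly K[n]} -> Prop)
    (l : {mpoly K[n]} -> K) : Prop :=
  (forall (a : K) (f g : {mpoly K[n]}), l (a *: f + g) = a * l f + l g) /\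
  (forall f, I f -> l f = 0).

Definition mseq (K : fieldType) (n : nat) := 'X_{1..n} -> K.

Definition useq (K : fieldType) (n : nat) (l : {mpoly K[n]} -> K) : mseq K n :=
  fun m => l 'X_[m].

Definition pairing (K : fieldType) (n : nat) (u : mseq K n) (f : {mpoly K[n]}) : K :=
  \sum_(m <- msupp f) f@_m * u m.

Definition pshift (K : fieldType) (n : nat) (f : {mpoly K[n]}) (u : mseq K n) : mseq K n :=
  fun m => pairing u ('X_[m] * f).

Definition ann (K : fieldType) (n : nat) (u : mseq K n) : {mpoly K[n]} -> Prop :=
  fun f => forall m, pshift f u m = 0.

Definition ann_first (K : fieldType) (n tau : nat) (l : 'I_tau -> {mpoly K[n]} -> K)
    (t : nat) : {mpoly K[n]} -> Prop :=
  fun f => forall i : 'I_tau, (i < t)%N -> ann (useq (l i)) f.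

Definition set_eq (T : Type) (A B : T -> Prop) : Prop := forall x, A x <-> B x.

Definition strict_subset (T : Type) (A B : T -> Prop) : Prop :=
  (forall x, A x -> B x) /\ exists x, B x /\ ~ A x.

(* Coordinates of a tuple (l_1..l_tau) in (Q^dual )^tau ~ K^(tau D), w.r.t. the
   dual basis of b: the (i,j) coordinate is l_i(b_j). *)
Definition coords (K : fieldType) (n D tau : nat) (b : 'I_D -> {mpoly K[n]})
    (l : 'I_tau -> {mpoly K[n]} -> K) : 'I_(tau * D) -> K :=
  fun k => mxvec (\matrix_(i, j) (l i (b j) : K) : 'M[K]_(tau, D)) ord0 k.

(* A property P of points of K^N holds generically: there is a proper
   Zariski-closed subset V(S) of K^N outside of which P holds. *)
Definition generic (K : fieldType) (N : nat) (P : ('I_N -> K) -> Prop) : Prop :=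
  exists S : {mpoly K[N]} -> Prop,
    (exists x : 'I_N -> K, exists p, S p /\ p.@[x] <> 0) /\
    (forall x : 'I_N -> K, (exists p, S p /\ p.@[x] <> 0) -> P x).

Definition good_tuple (K : fieldType) (n tau : nat) (I : {mpoly K[n]} -> Prop)
    (l : 'I_tau -> {mpoly K[n]} -> K) : Prop :=
  (forall t : nat, (1 <= t)%N -> (t < tau)%N ->
      strict_subset (ann_first l t.+1) (ann_first l t)) /\
  set_eq (ann_first l tau) I.

Definition generically_good (K : fieldType) (n D : nat) (I : {mpoly K[n]} -> Prop)
    (b : 'I_D -> {mpoly K[n]}) (tau : nat) : Prop :=
  generic (fun x : 'I_(tau * D) -> K =>
    forall l : 'I_tau -> {mpoly K[n]} -> K,
      (forall i, is_dual I (l i)) -> coords b l = x -> good_tuple I l).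

From HB Require Import structures.
From mathcomp Require Import all_boot all_order all_algebra.
From mathcomp Require Import mpoly ring zify.
From Stdlib Require Import ClassicalEpsilon FunctionalExtensionality.
Set Implicit Arguments. Unset Strict Implicit. Unset Printing Implicit Defensive.
Import GRing.Theory.
Local Open Scope ring_scope.

(* Modulo I a polynomial f is a row vector a of coordinates in the basis b, and
   f lies in ann(u_{l_0},...,u_{l_{t-1}}) iff a is in the left kernel of the
   D x tD matrix H_t(l) with entries l_i(b_k b_j).  Hence the annihilators
   decrease strictly exactly when the ranks of the H_t increase strictly, and
   the annihilator equals I exactly when H_t has full rank D.  Let r_t be the
   largest rank of H_t over all tuples of forms: r_t increases strictly until it
   reaches D, and tau is the first t with r_t = D.  The entries of H_t are linear
   in the coordinates of the tuple, so rank H_t >= r_t off the zero set of an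
   r_t-minor; K being infinite, the product of these minors for t <= tau does
   not vanish identically, which gives genericity.  Conversely a generic tuple
   of length tau' has H_tau' of full rank, so tau <= tau'; and if tau < tau',
   at a point generic for both conditions the annihilator at step tau is
   already I, so it cannot decrease strictly at step tau + 1. *)

Section Nonvanishing.

Variable K : fieldType.
Hypothesis infK : infinite_field K.

Lemma exists_uniq_seq k : exists s : seq K, uniq s /\ size s = k.
Proof.
elim: k => [|k [s [us <-]]]; first by exists [::].
by have [x xs] := infK s; exists (x :: s); rewrite /= xs us.
Qed.

Lemma exists_nonroot (p : {poly K}) : p != 0 -> exists c, ~~ root p c.
Proof.
move=> p_neq0; have [s [us sz_s]] := exists_uniq_seq (size p).
apply: NNPP => no_nonroot.
have all_roots : all (root p) s.
  by apply/allP => c _; apply/negPn/negP => nroot; apply: no_nonroot; exists c.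
by have := max_poly_roots p_neq0 all_roots us; rewrite sz_s ltnn.
Qed.

Lemma horner_mmap_polyC N (p : {mpoly K[N]}) (v : 'I_N -> {poly K}) c :
  (mmap polyC v p).[c] = p.@[fun i => (v i).[c]].
Proof.
rewrite mevalE horner_sum; apply: eq_bigr => m _.
by rewrite hornerCM horner_prod; congr (_ * _); apply: eq_bigr => i _; rewrite horner_exp.
Qed.

(* Restricting p and q to the line through a point where p does not vanish
   and one where q does not vanish gives two nonzero univariate polynomials. *)
Lemma exists_meval_mul_neq0 N (p q : {mpoly K[N]}) :
  (exists x, p.@[x] != 0) -> (exists y, q.@[y] != 0) -> exists z, (p * q).@[z] != 0.
Proof.
move=> [x px] [y qy].
pose v i := (x i)%:P + (y i - x i)%:P * 'X.
have line_at0 : (fun i => (v i).[0]) =1 x.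
  by move=> i; rewrite /v hornerD hornerCM hornerX mulr0 addr0 hornerC.
have line_at1 : (fun i => (v i).[1]) =1 y.
  by move=> i; rewrite /v hornerD hornerCM hornerX mulr1 hornerC addrC subrK.
have p_line : mmap polyC v p != 0.
  by apply: contraNneq px => p0; rewrite -(meval_eq _ line_at0) -horner_mmap_polyC p0 horner0.
have q_line : mmap polyC v q != 0.
  by apply: contraNneq qy => q0; rewrite -(meval_eq _ line_at1) -horner_mmap_polyC q0 horner0.
have [c pq_c] := exists_nonroot (mulf_neq0 p_line q_line).
by exists (fun i => (v i).[c]); rewrite -horner_mmap_polyC rmorphM.
Qed.

End Nonvanishing.

Lemma generic_of_mpoly (K : fieldType) N (P : ('I_N -> K) -> Prop) (p : {mpoly K[N]}) :
  (exists x, p.@[x] != 0) -> (forall x, p.@[x] != 0 -> P x) -> generic P.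
Proof.
move=> [x px] Pp; exists (fun q => q = p); split; first by exists x, p; split=> //; apply/eqP.
by move=> y [_ [-> py]]; apply/Pp/eqP.
Qed.

Lemma generic_meet_mpoly (K : fieldType) N (P : ('I_N -> K) -> Prop) (q : {mpoly K[N]}) :
  infinite_field K -> generic P -> (exists y, q.@[y] != 0) -> exists2 x, P x & q.@[x] != 0.
Proof.
move=> infK [S [[x0 [p [Sp px0]]] SP]] q_nz.
have [x] := exists_meval_mul_neq0 infK (ex_intro _ x0 (introN eqP px0)) q_nz.
rewrite mevalM mulf_eq0 negb_or => /andP [px qx].
by exists x => //; apply: SP; exists p; split=> //; apply/eqP.
Qed.

Section Minors.

Variables (F : fieldType) (m p : nat).

Lemma exists_minor_neq0 (A : 'M[F]_(m, p)) :
  exists (U : 'M[F]_(\rank A, m)) (V : 'M[F]_(p, \rank A)), \det (U *m A *m V) != 0.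
Proof.
set r := \rank A; set C := col_ebase A; set R := row_ebase A.
exists (pid_mx r *m invmx C), (invmx R *m pid_mx r).
have -> : pid_mx r *m invmx C *m A *m (invmx R *m pid_mx r) =
          (pid_mx r : 'M_(r, m)) *m (pid_mx r : 'M_(m, p)) *m (pid_mx r : 'M_(p, r)).
  rewrite -(mulmx_ebase A) !mulmxA mulmxKV ?col_ebase_unit //.
  by rewrite -[_ *m R *m invmx R]mulmxA mulmxV ?row_ebase_unit // mulmx1.
rewrite !mul_pid_mx !minnn (minn_idPr (rank_leq_row A)) minnn.
by rewrite (minn_idPr (rank_leq_col A)) pid_mx_1 det1 oner_neq0.
Qed.

Lemma minor_neq0_rank r (A : 'M[F]_(m, p)) (U : 'M[F]_(r, m)) (V : 'M[F]_(p, r)) :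
  \det (U *m A *m V) != 0 -> (r <= \rank A)%N.
Proof.
rewrite -unitfE -unitmxE => /mxrank_unit <-.
exact: leq_trans (mxrankM_maxl _ _) (mxrankM_maxr _ _).
Qed.

End Minors.

Definition asbool (P : Prop) : bool := if excluded_middle_informative P then true else false.

Lemma asboolP (P : Prop) : reflect P (asbool P).
Proof. by rewrite /asbool; case: excluded_middle_informative => p; constructor. Qed.

Section IdealsAndDuals.

Variables (K : fieldType) (n : nat) (I : {mpoly K[n]} -> Prop).
Hypothesis idealI : is_ideal I.

Lemma ideal0 : I 0.
Proof. by case: idealI. Qed.

Lemma idealD f g : I f -> I g -> I (f + g).
Proof. by case: idealI => _ + _; apply. Qed.

Lemma idealMl f g : I g -> I (f * g).
Proof. by case: idealI => _ _; apply. Qed.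

Lemma idealMr f g : I f -> I (f * g).
Proof. by rewrite mulrC; apply: idealMl. Qed.

Lemma idealZ a f : I f -> I (a *: f).
Proof. by rewrite -mul_mpolyC; apply: idealMl. Qed.

Lemma idealN f : I f -> I (- f).
Proof. by rewrite -scaleN1r; apply: idealZ. Qed.

Lemma idealB f g : I f -> I g -> I (f - g).
Proof. by move=> If Ig; apply: idealD => //; apply: idealN. Qed.

Section DualForm.

Variable l : {mpoly K[n]} -> K.
Hypothesis dual_l : is_dual I l.

Lemma dualD f g : l (f + g) = l f + l g.
Proof. by rewrite -[f in LHS]scale1r dual_l.1 mul1r. Qed.

Lemma dual0 : l 0 = 0.
Proof. by apply: (@addrI _ (l 0)); rewrite -dualD !addr0. Qed.

Lemma dualZ a f : l (a *: f) = a * l f.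
Proof. by rewrite -[a *: f]addr0 dual_l.1 dual0 addr0. Qed.

Lemma dualB f g : l (f - g) = l f - l g.
Proof. by rewrite dualD -[- g]scaleN1r dualZ mulN1r. Qed.

Lemma dual_sum (T : Type) (r : seq T) (F : T -> {mpoly K[n]}) :
  l (\sum_(x <- r) F x) = \sum_(x <- r) l (F x).
Proof. exact: (big_morph l dualD dual0). Qed.

Lemma dual_ideal f : I f -> l f = 0.
Proof. exact: dual_l.2. Qed.

Lemma pairing_useq g : pairing (useq l) g = l g.
Proof.
rewrite /pairing [in RHS](mpolyE g) dual_sum.
by apply: eq_bigr => m _; rewrite dualZ.
Qed.

Lemma ann_useqE f : ann (useq l) f <-> forall m, l ('X_[m] * f) = 0.
Proof.
by split=> ann_f m; [rewrite -pairing_useq | rewrite /pshift pairing_useq]; apply: ann_f.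
Qed.

Lemma ann_useq_ideal f : I f -> ann (useq l) f.
Proof. by move=> If; apply/ann_useqE => m; apply: dual_ideal; apply: idealMl. Qed.

End DualForm.

Lemma ann_useq0 f : ann (useq (fun _ : {mpoly K[n]} => 0 : K)) f.
Proof. by move=> m; rewrite /pshift /pairing big1 // => i _; rewrite mulr0. Qed.

Lemma dual_zero : is_dual I (fun _ => 0).
Proof. by split=> [a f g|f _]; rewrite ?mulr0 ?addr0. Qed.

End IdealsAndDuals.

Section QuotientBasis.

Variables (K : fieldType) (n D : nat) (I : {mpoly K[n]} -> Prop).
Variable b : 'I_D -> {mpoly K[n]}.

Definition poly_of_row (a : 'rV[K]_D) : {mpoly K[n]} := \sum_j a 0 j *: b j.

Fact poly_of_row_is_linear : linear poly_of_row.
Proof.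
move=> c a a'; rewrite /poly_of_row scaler_sumr -big_split; apply: eq_bigr => j _.
by rewrite !mxE scalerDl scalerA.
Qed.

HB.instance Definition _ :=
  GRing.isLinear.Build K 'rV[K]_D {mpoly K[n]} _ poly_of_row poly_of_row_is_linear.

Lemma poly_of_row_delta s : poly_of_row (delta_mx 0 s) = b s.
Proof.
rewrite /poly_of_row (bigD1 s) //= big1 ?addr0; first by rewrite mxE !eqxx scale1r.
by move=> j /negbTE js; rewrite mxE js andbF scale0r.
Qed.

Hypotheses (idealI : is_ideal I) (basis_b : basis_mod I b).

Lemma poly_of_row_ideal a : I (poly_of_row a) -> a = 0.
Proof. by move=> /basis_b.2 a0; apply/rowP => j; rewrite [RHS]mxE a0. Qed.

Definition coord_mod f : 'rV[K]_D :=
  \row_j proj1_sig (constructive_indefinite_description _ (basis_b.1 f)) j.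

Lemma coord_modP f : I (f - poly_of_row (coord_mod f)).
Proof.
rewrite /coord_mod /poly_of_row; case: constructive_indefinite_description => c /= Ic.
by under eq_bigr do rewrite mxE.
Qed.

Lemma coord_mod_eq f a : I (f - poly_of_row a) -> coord_mod f = a.
Proof.
move=> Ifa; apply/eqP; rewrite -subr_eq0; apply/eqP/poly_of_row_ideal.
have -> : poly_of_row (coord_mod f - a) =
          (f - poly_of_row a) - (f - poly_of_row (coord_mod f)).
  by rewrite linearB /=; ring.
by apply: idealB => //; apply: coord_modP.
Qed.

Fact coord_mod_is_linear : linear coord_mod.
Proof.
move=> c f g; apply: coord_mod_eq; rewrite linearP /=.
have -> : c *: f + g - (c *: poly_of_row (coord_mod f) + poly_of_row (coord_mod g)) =
          c *: (f - poly_of_row (coord_mod f)) + (g - poly_of_row (coord_mod g)).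
  by rewrite scalerBr opprD addrACA.
by apply: idealD => //; [apply: idealZ => //|]; apply: coord_modP.
Qed.

HB.instance Definition _ :=
  GRing.isLinear.Build K {mpoly K[n]} 'rV[K]_D _ coord_mod coord_mod_is_linear.

Lemma coord_mod_poly_of_row a : coord_mod (poly_of_row a) = a.
Proof. by apply: coord_mod_eq; rewrite subrr; apply: ideal0. Qed.

Lemma coord_mod_eq0 f : coord_mod f = 0 <-> I f.
Proof.
split=> [c0|If]; last by apply: coord_mod_eq; rewrite linear0 subr0.
by have := coord_modP f; rewrite c0 linear0 subr0.
Qed.

Definition dual_of_row (v : 'I_D -> K) (f : {mpoly K[n]}) : K :=
  \sum_j coord_mod f 0 j * v j.

Lemma dual_of_row_dual v : is_dual I (dual_of_row v).
Proof.
split=> [a f g|f If]; last first.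
  by rewrite /dual_of_row (proj2 (coord_mod_eq0 f) If) big1 // => j _; rewrite mxE mul0r.
rewrite /dual_of_row linearP mulr_sumr -big_split; apply: eq_bigr => j _.
by rewrite !mxE mulrDl mulrA.
Qed.

Lemma dual_of_row_basis v s : dual_of_row v (b s) = v s.
Proof.
rewrite /dual_of_row -poly_of_row_delta coord_mod_poly_of_row (bigD1 s) //= big1 ?addr0.
  by rewrite mxE !eqxx mul1r.
by move=> j /negbTE js; rewrite mxE js andbF mul0r.
Qed.

Lemma exists_dual_neq0 f : ~ I f -> exists l, is_dual I l /\ l f != 0.
Proof.
move=> nIf; have [j cj] : exists j, coord_mod f 0 j != 0.
  apply: NNPP => all0; apply: nIf; apply/coord_mod_eq0/rowP => j.
  by rewrite [RHS]mxE; apply: NNPP => cj; apply: all0; exists j; apply/eqP.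
exists (fun g => coord_mod g 0 j); split=> //; split=> [a g h|g Ig].
  by rewrite linearP !mxE.
by rewrite (proj2 (coord_mod_eq0 g) Ig) mxE.
Qed.

Lemma ann_useq_basisE l f :
  is_dual I l -> ann (useq l) f <-> forall j, l (f * b j) = 0.
Proof.
move=> dual_l; rewrite (ann_useqE dual_l); split=> ann_f.
  move=> j; rewrite [b j]mpolyE mulr_sumr (dual_sum dual_l) big1 // => m _.
  by rewrite -scalerAr (dualZ dual_l) [f * _]mulrC ann_f mulr0.
move=> m; set c := coord_mod 'X_[m].
have -> : 'X_[m] * f = ('X_[m] - poly_of_row c) * f + \sum_j c 0 j *: (f * b j).
  rewrite mulrBl /poly_of_row mulr_suml (eq_bigr (fun j => c 0 j *: (f * b j))) ?subrK //.
  by move=> j _; rewrite -scalerAl mulrC.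
rewrite (dualD dual_l) (dual_sum dual_l) (dual_ideal dual_l) ?add0r; last first.
  by apply: (idealMr idealI); apply: coord_modP.
by rewrite big1 // => j _; rewrite (dualZ dual_l) ann_f mulr0.
Qed.

End QuotientBasis.

Section HankelMatrix.

Variables (K : fieldType) (n D : nat) (I : {mpoly K[n]} -> Prop).
Variable b : 'I_D -> {mpoly K[n]}.

Definition is_dual_seq (L : nat -> {mpoly K[n]} -> K) := forall k, is_dual I (L k).

Definition ann_forms (L : nat -> {mpoly K[n]} -> K) t f :=
  forall k, (k < t)%N -> ann (useq (L k)) f.

Definition hankel_mx t (L : nat -> {mpoly K[n]} -> K) : 'M[K]_(D, t * D) :=
  \matrix_(k < D) mxvec (\matrix_(i < t, j < D) L i (b k * b j)).

Lemma hankel_mxE t L k (i : 'I_t) j :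
  hankel_mx t L k (mxvec_index i j) = L i (b k * b j).
Proof. by rewrite mxE mxvecE mxE. Qed.

Lemma hankel_mx_eq t L L' :
  (forall k, (k < t)%N -> L k = L' k) -> hankel_mx t L = hankel_mx t L'.
Proof.
move=> eqLL'; apply/matrixP => k c; case: (mxvec_indexP c) => i j.
by rewrite !hankel_mxE eqLL'.
Qed.

Hypotheses (idealI : is_ideal I) (basis_b : basis_mod I b).

Section FixedForms.

Variables (t : nat) (L : nat -> {mpoly K[n]} -> K).
Hypothesis dual_L : is_dual_seq L.

Lemma mulmx_hankel_mx a (i : 'I_t) j :
  (a *m hankel_mx t L) 0 (mxvec_index i j) = L i (poly_of_row b a * b j).
Proof.
rewrite mxE /poly_of_row mulr_suml (dual_sum (dual_L i)); apply: eq_bigr => k _.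
by rewrite hankel_mxE -scalerAl (dualZ (dual_L i)).
Qed.

Lemma hankel_mx_kerP a :
  (a <= kermx (hankel_mx t L))%MS <-> ann_forms L t (poly_of_row b a).
Proof.
have annE k := ann_useq_basisE idealI basis_b (poly_of_row b a) (dual_L k).
split=> [/sub_kermxP aH0 k kt | ann_a].
  apply/(annE k) => j; have /rowP/(_ (mxvec_index (Ordinal kt) j)) := aH0.
  by rewrite mulmx_hankel_mx mxE.
apply/sub_kermxP/rowP => c; rewrite [RHS]mxE; case: (mxvec_indexP c) => i j.
by rewrite mulmx_hankel_mx; have /(annE i) := ann_a i (ltn_ord i); apply.
Qed.

Lemma ann_forms_ideal f : I f -> ann_forms L t f.
Proof. by move=> If k _; exact (ann_useq_ideal idealI (dual_L k) If). Qed.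

Lemma ann_forms_mod f g : I (f - g) -> ann_forms L t f -> ann_forms L t g.
Proof.
move=> Ifg ann_f k kt; apply/(ann_useqE (dual_L k)) => m.
have -> : 'X_[m] * g = 'X_[m] * f - 'X_[m] * (f - g) by ring.
have /(ann_useqE (dual_L k)) ann_fk := ann_f k kt.
rewrite (dualB (dual_L k)) ann_fk sub0r (dual_ideal (dual_L k)) ?oppr0 //.
exact: (idealMl idealI).
Qed.

Lemma ann_forms_coord_mod f :
  ann_forms L t (poly_of_row b (coord_mod basis_b f)) <-> ann_forms L t f.
Proof.
have If := coord_modP basis_b f.
split; apply: ann_forms_mod => //.
by rewrite -opprB; apply: idealN.
Qed.

Lemma rank_hankel_mx_full : \rank (hankel_mx t L) = D <-> forall f, ann_forms L t f -> I f.
Proof.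
have kerE : (kermx (hankel_mx t L) == 0) = (\rank (hankel_mx t L) == D).
  by rewrite -mxrank_eq0 mxrank_ker subn_eq0 eqn_leq rank_leq_row.
split=> [fullH f ann_f | ann_ideal].
  have /eqP ker0 : kermx (hankel_mx t L) == 0 by rewrite kerE fullH.
  apply/(coord_mod_eq0 idealI basis_b)/eqP; rewrite -submx0 -ker0.
  exact/hankel_mx_kerP/ann_forms_coord_mod.
apply/eqP; rewrite -kerE; apply/eqP/row_matrixP => r; rewrite row0.
by apply: (poly_of_row_ideal basis_b); apply/ann_ideal/hankel_mx_kerP/row_sub.
Qed.

End FixedForms.

Section TwoFormSeqs.

Variables (t t' : nat) (L L' : nat -> {mpoly K[n]} -> K).
Hypotheses (dual_L : is_dual_seq L) (dual_L' : is_dual_seq L').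
Hypothesis annS : forall f, ann_forms L t f -> ann_forms L' t' f.

Lemma kermx_hankel_mxS : (kermx (hankel_mx t L) <= kermx (hankel_mx t' L'))%MS.
Proof.
apply/row_subP => r.
exact/(hankel_mx_kerP t' dual_L')/annS/(hankel_mx_kerP t dual_L)/row_sub.
Qed.

Lemma rank_hankel_mx_le : (\rank (hankel_mx t' L') <= \rank (hankel_mx t L))%N.
Proof.
have := mxrankS kermx_hankel_mxS; rewrite !mxrank_ker.
have := rank_leq_row (hankel_mx t L); have := rank_leq_row (hankel_mx t' L'); lia.
Qed.

Lemma rank_hankel_mx_lt :
  (exists f, ann_forms L' t' f /\ ~ ann_forms L t f) ->
  (\rank (hankel_mx t' L') < \rank (hankel_mx t L))%N.
Proof.
move=> [f [ann'_f not_ann_f]].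
have : (kermx (hankel_mx t L) < kermx (hankel_mx t' L'))%MS.
  rewrite ltmxE kermx_hankel_mxS /=; apply/negP => kerS.
  apply/not_ann_f/(ann_forms_coord_mod t dual_L)/(hankel_mx_kerP t dual_L)/(submx_trans _ kerS).
  exact/(hankel_mx_kerP t' dual_L')/(ann_forms_coord_mod t' dual_L').
move/rank_ltmx; rewrite !mxrank_ker.
have := rank_leq_row (hankel_mx t L); have := rank_leq_row (hankel_mx t' L'); lia.
Qed.

End TwoFormSeqs.

End HankelMatrix.

Section MaxRank.

Variables (K : fieldType) (n D : nat) (I : {mpoly K[n]} -> Prop).
Variable b : 'I_D -> {mpoly K[n]}.

Definition rank_achieved t r :=
  exists2 L, is_dual_seq I L & \rank (hankel_mx b t L) = r.

Lemma exists_rank_achieved t : exists r, asbool (rank_achieved t r).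
Proof.
exists (\rank (hankel_mx b t (fun _ _ => 0))); apply/asboolP.
by exists (fun _ _ => 0) => // k; apply: dual_zero.
Qed.

Lemma rank_achieved_le t r : asbool (rank_achieved t r) -> (r <= D)%N.
Proof. by move=> /asboolP [L _ <-]; apply: rank_leq_row. Qed.

Definition max_rank t := ex_maxn (exists_rank_achieved t) (@rank_achieved_le t).

Lemma max_rank_achieved t : rank_achieved t (max_rank t).
Proof. by rewrite /max_rank; case: ex_maxnP => r /asboolP. Qed.

Lemma rank_le_max_rank t L :
  is_dual_seq I L -> (\rank (hankel_mx b t L) <= max_rank t)%N.
Proof.
move=> dual_L; rewrite /max_rank; case: ex_maxnP => r _; apply.
by apply/asboolP; exists L.
Qed.

Lemma max_rank_le_dim t : (max_rank t <= D)%N.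
Proof. by have [L _ <-] := max_rank_achieved t; apply: rank_leq_row. Qed.

Lemma max_rank_le_mul t : (max_rank t <= t * D)%N.
Proof. by have [L _ <-] := max_rank_achieved t; apply: rank_leq_col. Qed.

Hypotheses (idealI : is_ideal I) (basis_b : basis_mod I b).

Lemma max_rank_leS t : (max_rank t <= max_rank t.+1)%N.
Proof.
have [L dual_L <-] := max_rank_achieved t.
apply: leq_trans (rank_le_max_rank t.+1 dual_L).
by apply: (rank_hankel_mx_le idealI basis_b dual_L dual_L) => f ann_f k kt; apply/ann_f/ltnW.
Qed.

(* Adding a form that does not vanish on some f in ann(L_0..L_{t-1}) \ I
   removes f from the annihilator. *)
Lemma max_rank_ltS t : (max_rank t < D)%N -> (max_rank t < max_rank t.+1)%N.
Proof.
have [L dual_L rkL] := max_rank_achieved t; move=> lt_rk_D.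
have [f [ann_f nIf]] : exists f, ann_forms L t f /\ ~ I f.
  apply: NNPP => no_f; move: lt_rk_D; rewrite -rkL.
  rewrite (proj2 (rank_hankel_mx_full idealI basis_b t dual_L)) ?ltnn // => f ann_f.
  by apply: NNPP => nIf; apply: no_f; exists f.
have [l [dual_l lf]] := exists_dual_neq0 idealI basis_b nIf.
pose L' k := if k == t then l else L k.
have dual_L' : is_dual_seq I L' by move=> k; rewrite /L'; case: eqP.
apply: leq_trans (rank_le_max_rank t.+1 dual_L'); rewrite -rkL.
apply: (rank_hankel_mx_lt idealI basis_b dual_L' dual_L).
  move=> g ann_g k kt; have := ann_g k (ltnW kt).
  by rewrite /L' (ltn_eqF kt).
exists f; split=> // ann'_f; have := ann'_f t (ltnSn t); rewrite /L' eqxx.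
move=> /(ann_useqE dual_l) /(_ 0%MM); rewrite mpolyX0 mul1r => lf0.
by rewrite lf0 eqxx in lf.
Qed.

Lemma leq_max_rank t : (t <= D)%N -> (t <= max_rank t)%N.
Proof.
elim: t => // t IHt lt_t_D; have := IHt (ltnW lt_t_D).
case: (ltnP (max_rank t) D) => [lt_rk_D | le_D_rk] le_t_rk.
  exact: leq_ltn_trans le_t_rk (max_rank_ltS lt_rk_D).
exact: leq_trans lt_t_D (leq_trans le_D_rk (max_rank_leS t)).
Qed.

Lemma max_rank_dim : max_rank D = D.
Proof. by apply/eqP; rewrite eqn_leq max_rank_le_dim leq_max_rank. Qed.

End MaxRank.

Section FormTuples.

Variables (K : fieldType) (n T : nat) (l : 'I_T -> {mpoly K[n]} -> K).

Definition zero_ext (k : nat) : {mpoly K[n]} -> K := oapp l (fun _ => 0) (insub k).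

Lemma zero_ext_val (i : 'I_T) : zero_ext i = l i.
Proof. by rewrite /zero_ext valK. Qed.

Lemma zero_ext_dual I : (forall i, is_dual I (l i)) -> is_dual_seq I zero_ext.
Proof.
move=> dual_l k; rewrite /zero_ext.
by case: insubP => [i _ _|_] /=; [apply: dual_l | apply: dual_zero].
Qed.

Lemma ann_first_zero_ext t f : ann_first l t f <-> ann_forms zero_ext t f.
Proof.
split=> [ann_f k kt | ann_f i it]; last by rewrite -zero_ext_val; apply: ann_f.
rewrite /zero_ext; case: insubP => [i _ ik|_] /=; last exact: ann_useq0.
by apply: ann_f; rewrite ik.
Qed.

End FormTuples.

Section Genericity.

Variables (K : fieldType) (n D : nat) (I : {mpoly K[n]} -> Prop).
Variable b : 'I_D -> {mpoly K[n]}.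
Hypotheses (idealI : is_ideal I) (basis_b : basis_mod I b).

Lemma coordsE T (l : 'I_T -> {mpoly K[n]} -> K) i s :
  coords b l (mxvec_index i s) = l i (b s).
Proof. by rewrite /coords mxvecE mxE. Qed.

Lemma coords_surj T (x : 'I_(T * D) -> K) :
  exists l : 'I_T -> {mpoly K[n]} -> K, (forall i, is_dual I (l i)) /\ coords b l = x.
Proof.
exists (fun i => dual_of_row basis_b (fun s => x (mxvec_index i s))); split.
  by move=> i; apply: dual_of_row_dual.
apply: functional_extensionality => k; case: (mxvec_indexP k) => i s.
by rewrite coordsE dual_of_row_basis.
Qed.

Variable T : nat.

Definition form_var (k : nat) (s : 'I_D) : {mpoly K[T * D]} :=
  oapp (fun i : 'I_T => 'X_(mxvec_index i s)) 0 (insub k).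

Lemma meval_form_var (l : 'I_T -> {mpoly K[n]} -> K) k s :
  (form_var k s).@[coords b l] = zero_ext l k (b s).
Proof.
rewrite /form_var /zero_ext; case: insubP => [i _ _|_] /=; last by rewrite meval0.
by rewrite mevalXU coordsE.
Qed.

(* Writing b_k b_j = sum_s c_s b_s modulo I makes L_i (b_k b_j) a linear form
   in the coordinates L_i (b_s) of the tuple. *)
Definition hankel_mpoly t : 'M[{mpoly K[T * D]}]_(D, t * D) :=
  \matrix_(k < D) mxvec (\matrix_(i < t, j < D)
    \sum_s coord_mod basis_b (b k * b j) 0 s *: form_var i s).

Lemma map_hankel_mpoly (l : 'I_T -> {mpoly K[n]} -> K) t :
  (forall i, is_dual I (l i)) ->
  map_mx (meval (coords b l)) (hankel_mpoly t) = hankel_mx b t (zero_ext l).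
Proof.
move=> dual_l; apply/matrixP => k c; case: (mxvec_indexP c) => i j.
have dual_li := zero_ext_dual dual_l i.
rewrite hankel_mxE !mxE mxvecE mxE raddf_sum /=.
under eq_bigr do rewrite mevalZ meval_form_var.
have /(dual_ideal dual_li) := coord_modP basis_b (b k * b j).
rewrite (dualB dual_li) => /subr0_eq ->.
by rewrite (dual_sum dual_li); apply: eq_bigr => s _; rewrite (dualZ dual_li).
Qed.

Lemma max_rank_generic t : (t <= T)%N ->
  exists p : {mpoly K[T * D]}, (exists x, p.@[x] != 0) /\
    forall l, (forall i, is_dual I (l i)) -> p.@[coords b l] != 0 ->
      (max_rank I b t <= \rank (hankel_mx b t (zero_ext l)))%N.
Proof.
move=> le_t_T; have [L dual_L rkL] := max_rank_achieved I b t.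
have [U [V minor_nz]] := exists_minor_neq0 (hankel_mx b t L).
pose p := \det (map_mx (@mpolyC _ K) U *m hankel_mpoly t *m map_mx (@mpolyC _ K) V).
have p_coords l : (forall i, is_dual I (l i)) ->
    p.@[coords b l] = \det (U *m hankel_mx b t (zero_ext l) *m V).
  move=> dual_l; rewrite /p -det_map_mx !map_mxM map_hankel_mpoly //.
  by congr (\det (_ *m _ *m _)); apply/matrixP => i j; rewrite !mxE /= mevalC.
exists p; split=> [|l dual_l]; last by rewrite p_coords // -rkL => /minor_neq0_rank.
pose l0 (i : 'I_T) := L i.
exists (coords b l0); rewrite p_coords; last by move=> i; apply: dual_L.
suff -> : hankel_mx b t (zero_ext l0) = hankel_mx b t L by [].
by apply: hankel_mx_eq => k kt; rewrite /zero_ext insubT ?(leq_trans kt le_t_T).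
Qed.

End Genericity.

Section GenericLength.

Variables (K : fieldType) (n D : nat) (I : {mpoly K[n]} -> Prop).
Variable b : 'I_D -> {mpoly K[n]}.
Hypotheses (infK : infinite_field K) (idealI : is_ideal I) (basis_b : basis_mod I b).

Lemma max_ranks_generic T N : (N <= T.+1)%N ->
  exists p : {mpoly K[T * D]}, (exists x, p.@[x] != 0) /\
    forall l, (forall i, is_dual I (l i)) -> p.@[coords b l] != 0 ->
      forall t, (t < N)%N -> (max_rank I b t <= \rank (hankel_mx b t (zero_ext l)))%N.
Proof.
elim: N => [_|N IHN lt_N_T].
  by exists 1; split=> [|//]; exists (fun _ => 0); rewrite meval1 oner_neq0.
have [p [p_nz p_max]] := IHN (ltnW lt_N_T).
have [q [q_nz q_max]] := max_rank_generic basis_b (lt_N_T : (N <= T)%N).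
exists (p * q); split; first exact: exists_meval_mul_neq0.
move=> l dual_l; rewrite mevalM mulf_eq0 negb_or => /andP [pl ql] t.
by rewrite ltnS leq_eqVlt => /predU1P [-> | lt_t_N]; [apply: q_max | apply: p_max].
Qed.

Lemma exists_max_rank_full : exists t, max_rank I b t == D.
Proof. by exists D; rewrite max_rank_dim. Qed.

Definition generic_length := ex_minn exists_max_rank_full.

Local Notation tau := generic_length.

Lemma max_rank_generic_length : max_rank I b tau = D.
Proof. by rewrite /tau; case: ex_minnP => t /eqP. Qed.

Lemma generic_length_min t : max_rank I b t = D -> (tau <= t)%N.
Proof. by rewrite /tau; case: ex_minnP => t0 _ + /eqP; apply. Qed.

Lemma generic_length_le_dim : (tau <= D)%N.
Proof. exact/generic_length_min/max_rank_dim. Qed.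

Lemma max_rank_lt_dim t : (t < tau)%N -> (max_rank I b t < D)%N.
Proof.
move=> lt_t_tau; rewrite ltn_neqAle max_rank_le_dim andbT; apply/negP => /eqP.
by move/generic_length_min; rewrite leqNgt lt_t_tau.
Qed.

Lemma good_tuple_of_max_ranks (l : 'I_tau -> {mpoly K[n]} -> K) :
  (forall i, is_dual I (l i)) ->
  (forall t, (t <= tau)%N -> max_rank I b t <= \rank (hankel_mx b t (zero_ext l)))%N ->
  good_tuple I l.
Proof.
move=> dual_l max_rk; have dual_L := zero_ext_dual dual_l.
have rkE t : (t <= tau)%N -> \rank (hankel_mx b t (zero_ext l)) = max_rank I b t.
  by move=> le_t_tau; apply/eqP; rewrite eqn_leq max_rk // rank_le_max_rank.
have annI : forall f, ann_forms (zero_ext l) tau f -> I f.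
  apply/(rank_hankel_mx_full idealI basis_b tau dual_L).
  by rewrite rkE // max_rank_generic_length.
split=> [t _ lt_t_tau | f].
  split=> [f ann_f i it|]; first by apply/ann_f/ltnW.
  apply: NNPP => not_strict.
  have /(rank_hankel_mx_le idealI basis_b dual_L dual_L) : forall f,
      ann_forms (zero_ext l) t f -> ann_forms (zero_ext l) t.+1 f.
    move=> f /(ann_first_zero_ext l t f) ann_f; apply/(ann_first_zero_ext l t.+1 f).
    by apply: NNPP => not_ann_f; apply: not_strict; exists f.
  rewrite !rkE ?(ltnW lt_t_tau) // leqNgt => /negP; apply.
  exact/max_rank_ltS/max_rank_lt_dim.
split=> [/(ann_first_zero_ext l tau f)/annI // | If].
by apply/(ann_first_zero_ext l tau f); exact (ann_forms_ideal idealI dual_L If).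
Qed.

Lemma generically_good_generic_length : generically_good I b tau.
Proof.
have [p [p_nz p_max]] := max_ranks_generic (leqnn tau.+1).
apply: (generic_of_mpoly p_nz) => x px l dual_l cx.
by apply: good_tuple_of_max_ranks => // t; apply: p_max; rewrite ?cx.
Qed.

Lemma generic_length_le_good tau' : generically_good I b tau' -> (tau <= tau')%N.
Proof.
move=> good_tau'.
have one_nz : exists y, (1 : {mpoly K[tau' * D]}).@[y] != 0.
  by exists (fun _ => 0); rewrite meval1 oner_neq0.
have [x good_x _] := generic_meet_mpoly infK good_tau' one_nz.
have [l [dual_l cx]] := coords_surj idealI basis_b x.
have [_ ann_eq] := good_x l dual_l cx.
have dual_L := zero_ext_dual dual_l.
have full : \rank (hankel_mx b tau' (zero_ext l)) = D.
  apply/(rank_hankel_mx_full idealI basis_b tau' dual_L) => f.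
  by move=> /(ann_first_zero_ext l tau' f) /ann_eq.
apply: generic_length_min; apply/eqP; rewrite eqn_leq max_rank_le_dim /= -{1}full.
exact: rank_le_max_rank.
Qed.

Lemma good_le_generic_length tau' :
  (tau' <= D)%N -> generically_good I b tau' -> (tau' <= tau)%N.
Proof.
move=> le_tau'_D good_tau'; rewrite leqNgt; apply/negP => lt_tau_tau'.
have tau_gt0 : (0 < tau)%N.
  rewrite lt0n; apply: contraTneq le_tau'_D => tau0.
  have := max_rank_le_mul I b tau; rewrite max_rank_generic_length tau0 mul0n leqn0.
  by move=> /eqP ->; move: lt_tau_tau'; rewrite tau0 -ltnNge.
have [q [q_nz q_max]] := max_rank_generic basis_b (ltnW lt_tau_tau').
have [z good_z qz] := generic_meet_mpoly infK good_tau' q_nz.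
have [l [dual_l cz]] := coords_surj idealI basis_b z.
have [strict _] := good_z l dual_l cz.
have [_ [f [ann_f not_ann_f]]] := strict tau tau_gt0 lt_tau_tau'.
have dual_L := zero_ext_dual dual_l.
have full : \rank (hankel_mx b tau (zero_ext l)) = D.
  apply/eqP; rewrite eqn_leq rank_leq_row -{1}max_rank_generic_length.
  by apply: q_max; rewrite ?cz.
move/(ann_first_zero_ext l tau f): ann_f.
move=> /(proj1 (rank_hankel_mx_full idealI basis_b tau dual_L) full) If.
by apply/not_ann_f/(ann_first_zero_ext l tau.+1 f); exact (ann_forms_ideal idealI dual_L If).
Qed.

End GenericLength.

Theorem proposition1 (K : fieldType) (n D : nat) (I : {mpoly K[n]} -> Prop)
    (b : 'I_D -> {mpoly K[n]}) :
  perfect_field K -> infinite_field K ->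
  is_ideal I -> basis_mod I b ->
  exists! tau : nat, (tau <= D)%N /\ generically_good I b tau.
Proof.
move=> _ infK idealI basis_b.
exists (generic_length idealI basis_b); split.
  by split; [apply: generic_length_le_dim | apply: generically_good_generic_length].
move=> tau' [le_tau'_D good_tau']; apply/eqP; rewrite eqn_leq.
by rewrite good_le_generic_length // generic_length_le_good.
Qed.
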